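(* Let $\mathcal{X}$ be a compact subset and $\mathcal{Y}$ a finite subset of a metric space $(\mathcal{S},\eta)$. Then every function $f:\mathcal{X}\to\mathcal{Y}$ is $L$-invertible.
   Context: Hausdorff distance: for nonempty subsets $\mathcal{A},\mathcal{B}$ of $(\mathcal{S},\eta)$, $\mathcal{H}(\mathcal{A},\mathcal{B}):=\max\{\sup_{a\in\mathcal{A}}\inf_{b\in\mathcal{B}}\eta(a,b),\sup_{b\in\mathcal{B}}\inf_{a\in\mathcal{A}}\eta(a,b)\}$. A function $f:\mathcal{X}\to\mathcal{Y}$ is $L$-invertible if there is a constant $L_{f^{-1}}\ge0$ such that $\mathcal{H}(f^{-1}(y^1),f^{-1}(y^2))\le L_{f^{-1}}\,\eta(y^1,y^2)$ for all $y^1,y^2\in f(\mathcal{X})$, where $f^{-1}(y)=\{x\in\mathcal{X}:f(x)=y\}$. *)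

From HB Require Import structures.
From mathcomp Require Import all_boot all_order all_algebra.
From mathcomp Require Import all_classical all_reals all_analysis.

Set Implicit Arguments. Unset Strict Implicit. Unset Printing Implicit Defensive.
Import Order.TTheory GRing.Theory Num.Theory.
Local Open Scope classical_set_scope.
Local Open Scope ring_scope.

Definition hausdorff_dist {R : realType} {S : metricType R} (A B : set S) : \bar R :=
  maxe (ereal_sup [set ereal_inf [set (mdist a b)%:E | b in B] | a in A])
       (ereal_sup [set ereal_inf [set (mdist a b)%:E | a in A] | b in B]).

Definition fiber {S : Type} (X : set S) (f : S -> S) (y : S) : set S :=
  [set x | X x /\ f x = y].

Definition L_invertible {R : realType} {S : metricType R} (X : set S) (f : S -> S) : Prop :=
  exists L : R, 0 <= L /\
    forall y1 y2, (f @` X) y1 -> (f @` X) y2 ->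
      (hausdorff_dist (fiber X f y1) (fiber X f y2) <= (L * mdist y1 y2)%:E)%E.

From HB Require Import structures.
From mathcomp Require Import all_boot all_order all_algebra.
From mathcomp Require Import all_classical all_reals all_analysis.
Import Order.TTheory GRing.Theory Num.Theory.
Local Open Scope classical_set_scope.
Local Open Scope ring_scope.

(* Two distinct fibres of f lie in X, so their Hausdorff distance is at most
   the diameter D of the compact set X, while their base points lie at distance
   at least e, the least distance between distinct points of the finite set Y.
   Hence L := D / e works; equal fibres are at Hausdorff distance at most 0. *)

Section HausdorffDistance.
Context {R : realType} {S : metricType R}.
Implicit Types (A B : set S) (c : R).

Lemma hausdorff_dist_le A B c :
  (forall a, A a -> exists2 b, B b & mdist a b <= c) ->
  (forall b, B b -> exists2 a, A a & mdist a b <= c) ->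
  (hausdorff_dist A B <= c%:E)%E.
Proof.
move=> AB BA; rewrite /hausdorff_dist ge_max; apply/andP; split;
  apply: ge_ereal_sup => _ [x Xx <-].
- have [b Bb abc] := AB x Xx.
  apply: le_trans (_ : (mdist x b)%:E <= c%:E)%E; last by rewrite lee_fin.
  by apply: ereal_inf_lbound; exists b.
- have [a Aa abc] := BA x Xx.
  apply: le_trans (_ : (mdist a x)%:E <= c%:E)%E; last by rewrite lee_fin.
  by apply: ereal_inf_lbound; exists a.
Qed.

Lemma hausdorff_distxx_le0 A : (hausdorff_dist A A <= 0%:E)%E.
Proof. by apply: hausdorff_dist_le => a Aa; exists a; rewrite ?mdistxx. Qed.

Lemma hausdorff_dist_le_uniform A B c :
  A !=set0 -> B !=set0 -> (forall a b, A a -> B b -> mdist a b <= c) ->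
  (hausdorff_dist A B <= c%:E)%E.
Proof.
move=> [a0 Aa0] [b0 Bb0] ABc.
by apply: hausdorff_dist_le => [a Aa|b Bb]; [exists b0|exists a0]; rewrite ?ABc.
Qed.

End HausdorffDistance.

Section MetricBounds.
Context {R : realType} {S : metricType R}.

Lemma compact_mdist_bounded {X : set S} (x0 : S) :
  compact X -> exists r, forall x, X x -> mdist x0 x < r.
Proof.
move=> cX.
have : \forall r \near +oo, forall x, X x -> mdist x0 x < r.
  apply: ((compact_near_coveringP X).1 cX R _ (fun r x => mdist x0 x < r)).
  move=> x Xx.
  exists (ball x 1, [set r | mdist x0 x + 1 < r]).
    split; first exact: nbhsx_ballx.
    by exists (mdist x0 x + 1); split; [exact: num_real|].
  move=> [y r] [/= xy xr]; rewrite ballEmdist /= in xy.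
  by apply: le_lt_trans (metric_triangle _ x _) (lt_trans _ xr); rewrite ltrD2l.
by move=> [M [_ XM]]; exists (M + 1); apply: XM; rewrite ltrDl.
Qed.

Lemma compact_diam_bounded {X : set S} :
  compact X -> exists2 D, 0 <= D & forall a b, X a -> X b -> mdist a b <= D.
Proof.
move=> cX; have [[x0 Xx0]|X0] := pselect (X !=set0); last first.
  by exists 0 => // a b Xa; exfalso; apply: X0; exists a.
have [r Xr] := compact_mdist_bounded x0 cX.
have r0 : 0 < r by rewrite -(mdistxx x0) Xr.
exists (r + r) => [|a b Xa Xb]; first by rewrite addr_ge0 ?ltW.
apply: le_trans (metric_triangle _ x0 _) _.
by rewrite metric_sym lerD ?ltW ?Xr.
Qed.

Lemma finite_set_separated {Y : set S} :
  finite_set Y ->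
  exists2 e, 0 < e & forall y1 y2, Y y1 -> Y y2 -> y1 != y2 -> e <= mdist y1 y2.
Proof.
move=> /finite_seqP[s ->].
exists (\big[Num.min/1]_(p <- [seq (y1, y2) | y1 <- s, y2 <- s] | p.1 != p.2)
          mdist p.1 p.2).
  elim/big_ind: _ => [|u v u0 v0|[y1 y2] /= y12]; rewrite ?lt_min ?u0 ?v0 //.
  by rewrite mdist_gt0.
move=> y1 y2 sy1 sy2 y12.
by apply: (@ge_bigmin_seq _ _ _ _ _ (y1, y2)); first exact: allpairs_f.
Qed.

End MetricBounds.

Theorem lemma5 (R : realType) (S : metricType R) (X Y : set S)
  (hX : compact X) (hY : finite_set Y)
  (f : S -> S) (hf : forall x, X x -> Y (f x)) :
  L_invertible X f.
Proof.
have [D D0 XD] := compact_diam_bounded hX.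
have [e e0 Ye] := finite_set_separated hY.
exists (D / e); split; first exact: divr_ge0 D0 (ltW e0).
move=> _ _ [x1 Xx1 <-] [x2 Xx2 <-].
have [<-|f12] := eqVneq (f x1) (f x2).
  by rewrite mdistxx mulr0; apply: hausdorff_distxx_le0.
apply: hausdorff_dist_le_uniform.
- by exists x1.
- by exists x2.
move=> a b [Xa _] [Xb _]; apply: le_trans (XD a b Xa Xb) _.
rewrite mulrAC ler_pdivlMr //.
exact: ler_wpM2l D0 _ _ (Ye _ _ (hf _ Xx1) (hf _ Xx2) f12).
Qed.
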